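(* Let $K$ be a number field and $C$ the correspondence $g(y)=f(x)$ with $f,g\in K[z]$, $\deg f=d>\deg g=e\ge1$. Let $P$ be a path of $C$ with entries in $\overline{K}$. Then $v\mapsto G_C(P,v)$ is a measurable function on $M_{\overline{K}}$, the limit $\hat h_C(P)=\lim_{n\to\infty}(e/d)^nh(\pi(\sigma^n(P)))$ exists, and \[\hat h_C(P)=\int_{M_{\overline{K}}}G_C(P,v)\,d\mu(v).\]
   Context: $C=\{(a,b)\in\overline{K}^2:g(b)=f(a)\}$. A path is $P=(x_n)_{n\ge0}$ with $(x_n,x_{n+1})\in C$; $\pi(P)=x_0$, $\sigma(P)=(x_{n+1})_n$. $G_C(P,v)=\lim_n(e/d)^n\log^+|\pi(\sigma^nP)|_v$. $h$ is the absolute logarithmic Weil height. $M_{\overline{K}}$ is the set of absolute values on $\overline{K}$ extending the (normalized) places of $K$, equipped with a $\sigma$-algebra and measure $\mu$ such that for every finite extension $L/K$ and place $w$ of $L$ the set of $v$ restricting to $w$ is measurable with measure $[L_w:K_w]/[L:K]$, and $h(\alpha)=\int\log^+|\alpha|_v\,d\mu(v)$ for all $\alpha\in\overline{K}$. *)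

From HB Require Import structures.
From mathcomp Require Import all_boot all_order all_algebra all_field.
From mathcomp Require Import all_classical all_reals all_analysis.
Set Implicit Arguments. Unset Strict Implicit. Unset Printing Implicit Defensive.
Import Order.TTheory GRing.Theory Num.Theory.
Import numFieldNormedType.Exports.
Local Open Scope classical_set_scope.
Local Open Scope ring_scope.

(* algC is the field of algebraic numbers, i.e. \overline{Q} = \overline{K}
   for any number field K. *)

Definition algCtoR (R : realType) (x : algC) : R :=
  sup [set (ratr q : R) | q in [set q : rat | (ratr q : algC) <= x]].

Definition minQpoly (x : algC) : {poly rat} := sval (minCpolyP x).

(* Leading coefficient of the primitive integer minimal polynomial of x:
   the lcm of the denominators of the coefficients of the monic one. *)
Definition minZlead (x : algC) : nat :=
  \big[lcmn/1%N]_(i < size (minQpoly x)) `|denq (minQpoly x)`_i|%N.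

Definition conjugates (x : algC) : seq algC :=
  sval (closed_field_poly_normal (minCpoly x)).

Definition logp (R : realType) (t : R) : R := ln (Num.max 1 t).

(* Absolute logarithmic Weil height, via the Mahler measure of the
   primitive integer minimal polynomial:
   h(x) = (log a_0 + sum_{conjugates y} log^+ |y|) / deg x. *)
Definition weil_height (R : realType) (x : algC) : R :=
  ((size (minCpoly x)).-1%:R)^-1 *
  (ln ((minZlead x)%:R : R) +
   \sum_(y <- conjugates x) logp (algCtoR R `|y|)).

Definition is_absval (R : realType) (a : algC -> R) : Prop :=
  [/\ forall x, a x = 0 <-> x = 0,
      forall x y, a (x * y) = a x * a y &
      forall x y, a (x + y) <= a x + a y].

(* The absolute value extends one of the normalized places of Q: either the
   usual archimedean absolute value, or a p-adic one with |p| = 1/p. *)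
Definition extends_place_of_Q (R : realType) (a : algC -> R) : Prop :=
  (forall q : rat, a (ratr q) = `|(ratr q : R)|) \/
  (exists p : nat, [/\ prime p, a p%:R = (p%:R : R)^-1 &
      forall l : nat, prime l -> l != p -> a l%:R = 1]).

Definition is_path (f g : {poly algC}) (P : nat -> algC) : Prop :=
  forall n, g.[P n.+1] = f.[P n].

(* (e/d)^n log^+ |pi(sigma^n P)|_v, whose limit is G_C(P, v) *)
Definition G_seq (R : realType) (d e : nat) (a : algC -> R)
  (P : nat -> algC) (n : nat) : R :=
  ((e%:R / d%:R) ^+ n) * logp (a (P n)).

Definition G_C (R : realType) (d e : nat) (a : algC -> R)
  (P : nat -> algC) : R :=
  limn (G_seq d e a P).

(* Fix a place v. Bounding |p(x)|_v above by |x|_v^deg p and below by its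
   inverse, up to factors max(1, |c|_v) for finitely many algebraic c (the
   coefficients of p, its leading coefficient inverse, and some integers),
   the relation g(x_{n+1}) = f(x_n) gives
     |e log^+|x_{n+1}|_v - d log^+|x_n|_v| <= C(v),
   where C(v) is a nonnegative combination of such log^+|c|_v. The integers
   are harmless because a place extending one of Q is either the usual
   absolute value on Q or ultrametric. Hence (e/d)^n log^+|x_n|_v converges
   geometrically to G_C(P, v), within (e/d)^n C(v) / (d - e), and since
   C integrates to a finite combination of heights, integrating this bound
   yields h_C(P) = int G_C(P, v) dmu(v). *)

From HB Require Import structures.
From mathcomp Require Import all_boot all_order all_algebra all_field.
From mathcomp Require Import all_classical all_reals all_analysis.
From mathcomp Require Import measurable_realfun ring lra.
Import Order.TTheory GRing.Theory Num.Theory.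
Import numFieldNormedType.Exports.
Local Open Scope classical_set_scope.
Local Open Scope ring_scope.
Set Implicit Arguments.
Unset Strict Implicit.
Unset Printing Implicit Defensive.

Section AbsoluteValue.
Variables (R : realType) (a : algC -> R).
Hypothesis ha : is_absval a.

Lemma absval_eq0 x : (a x == 0) = (x == 0).
Proof. by case: ha => h _ _; apply/eqP/eqP => /h. Qed.

Lemma absval0 : a 0 = 0.
Proof. by apply/eqP; rewrite absval_eq0. Qed.

Lemma absvalM x y : a (x * y) = a x * a y.
Proof. by case: ha. Qed.

Lemma absvalD x y : a (x + y) <= a x + a y.
Proof. by case: ha. Qed.

Lemma absval1 : a 1 = 1.
Proof.
have a1_neq0 : a 1 != 0 by rewrite absval_eq0 oner_neq0.
by apply: (mulfI a1_neq0); rewrite -absvalM !mulr1.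
Qed.

Lemma absvalX x n : a (x ^+ n) = a x ^+ n.
Proof. by elim: n => [|n IH]; rewrite ?absval1 // !exprS absvalM IH. Qed.

Lemma absval_ge0 x : 0 <= a x.
Proof. by rewrite -(sqrtCK x) absvalX sqr_ge0. Qed.

Lemma absvalN x : a (- x) = a x.
Proof.
suff aN1 : a (-1) = 1 by rewrite -mulN1r absvalM aN1 mul1r.
have /eqP : a (-1) ^+ 2 = 1 by rewrite -absvalX sqrrN expr1n absval1.
rewrite sqrf_eq1 => /orP[/eqP // | /eqP aN1].
by have := absval_ge0 (-1); rewrite aN1 ler0N1.
Qed.

Lemma absvalV x : a x^-1 = (a x)^-1.
Proof.
have [->|x_neq0] := eqVneq x 0; first by rewrite invr0 absval0 invr0.
have ax_neq0 : a x != 0 by rewrite absval_eq0.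
by apply: (mulfI ax_neq0); rewrite -absvalM !divff // absval1.
Qed.

Lemma absval_sum I (s : seq I) (P : pred I) (t : I -> algC) :
  a (\sum_(i <- s | P i) t i) <= \sum_(i <- s | P i) a (t i).
Proof.
elim/big_rec2: _ => [|i y1 y2 _ IH]; first by rewrite absval0.
exact: le_trans (absvalD _ _) (lerD (lexx _) IH).
Qed.

End AbsoluteValue.

Lemma bernoulli_ler (R : realDomainType) (q : R) n : 1 <= q ->
  1 + n%:R * (q - 1) <= q ^+ n.
Proof.
move=> q_ge1; elim: n => [|n IH]; first by rewrite mul0r addr0 expr0.
have q1_ge0 : 0 <= q - 1 by rewrite subr_ge0.
have : 0 <= (q - 1) * (q ^+ n - (1 + n%:R * (q - 1))) by rewrite mulr_ge0 ?subr_ge0.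
have : 0 <= n%:R * ((q - 1) * (q - 1)) by rewrite !mulr_ge0.
rewrite exprS -natr1; nra.
Qed.

(* The archimedean obstruction to [q > 1] having at most linear powers: by
   Bernoulli, [q ^+ (2 * N) >= (1 + N (q - 1)) ^+ 2], which is quadratic in [N]. *)
Lemma expr_le_natS_le1 (R : realType) (q : R) :
  (forall N, q ^+ N <= N.+1%:R) -> q <= 1.
Proof.
move=> q_lin; rewrite leNgt; apply/negP => q_gt1.
set eps := q - 1; have eps_gt0 : 0 < eps by rewrite subr_gt0.
have := archi_boundP (ltW (divr_gt0 (ltr0n R 2) (mulr_gt0 eps_gt0 eps_gt0))).
set N := Num.Def.archi_bound _; rewrite ltr_pdivrMr ?mulr_gt0 // => NepsE.
have N_gt0 : 0 < (N%:R : R).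
  rewrite lt_neqAle ler0n andbT; apply: contraTneq NepsE => <-.
  by rewrite mul0r ltNge ler0n.
have bern := bernoulli_ler N (ltW q_gt1).
have sq_bern : (1 + N%:R * eps) ^+ 2 <= (q ^+ N) ^+ 2.
  rewrite lerXn2r ?nnegrE ?exprn_ge0 ?(le_trans ler01 (ltW q_gt1)) //.
  by rewrite addr_ge0 ?mulr_ge0 ?ltW.
have := q_lin (N + N)%N; rewrite exprD -expr2 -addSn natrD => quad.
have := mulr_gt0 N_gt0 eps_gt0; rewrite -/eps in bern NepsE; nra.
Qed.

Lemma le_of_expr_le_natS (R : realType) (s m : R) : 0 <= m ->
  (forall N, s ^+ N <= N.+1%:R * m ^+ N) -> s <= m.
Proof.
move=> m_ge0 s_lin; have [m0|m_gt0] := eqVneq m 0.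
  by have := s_lin 1%N; rewrite !expr1 m0 mulr0.
have {m_gt0 m_ge0} m_gt0 : 0 < m by rewrite lt_def m_gt0.
suff : s / m <= 1 by rewrite ler_pdivrMr // mul1r.
apply: expr_le_natS_le1 => N.
by rewrite expr_div_n ler_pdivrMr ?exprn_gt0.
Qed.

Section PlacesOfQ.
Variables (R : realType) (a : algC -> R).
Hypothesis ha : is_absval a.

Lemma absval_nat_le1 : (forall p, prime p -> a p%:R <= 1) ->
  forall n, a n%:R <= 1.
Proof.
move=> a_prime n; elim/ltn_ind: n => -[|[|n]] IH.
- by rewrite absval0 // ler01.
- by rewrite absval1.
rewrite -(divnK (pdiv_dvd n.+2)) natrM absvalM //.
apply: mulr_ile1; rewrite ?absval_ge0 ?(a_prime _ (pdiv_prime _)) //.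
by apply: IH; rewrite ltn_Pdiv ?prime_gt1 ?pdiv_prime.
Qed.

(* Expanding [(x + y) ^+ N] by the binomial theorem, each of the [N.+1] terms
   is at most the [N]-th power of the maximum since [a 'C(N, i) <= 1]. *)
Lemma absval_ultrametric : (forall n, a n%:R <= 1) ->
  forall x y, a (x + y) <= Num.max (a x) (a y).
Proof.
move=> a_nat x y; set m := Num.max _ _.
have m_ge0 : 0 <= m by rewrite le_max absval_ge0.
apply: le_of_expr_le_natS => // N.
rewrite -absvalX // exprDn; apply: le_trans (absval_sum ha _ _ _) _.
have -> : N.+1%:R * m ^+ N = \sum_(i < N.+1) m ^+ N.
  by rewrite sumr_const card_ord mulr_natl.
apply: ler_sum => i _.
rewrite -mulr_natr !absvalM // -[leRHS]mulr1 ler_pM ?mulr_ge0 ?absval_ge0 //.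
rewrite !absvalX // -[in leRHS](subnK (ltnSE (ltn_ord i))) exprD.
by rewrite ler_pM ?exprn_ge0 ?absval_ge0 // lerXn2r ?nnegrE ?absval_ge0 // le_max lexx ?orbT.
Qed.

Lemma absval_place_cases : extends_place_of_Q a ->
  (forall n : nat, a n%:R = n%:R) \/ (forall x y, a (x + y) <= Num.max (a x) (a y)).
Proof.
case=> [a_rat | [p [p_prime ap a_other]]].
  by left => n; rewrite -(ratr_nat algC) a_rat ratr_nat normr_nat.
right; apply/absval_ultrametric/absval_nat_le1 => l l_prime.
have [->|lp] := eqVneq l p; last by rewrite a_other.
by rewrite ap invf_le1 ?ltr0n ?prime_gt0 // ler1n prime_gt0.
Qed.

End PlacesOfQ.

Section Max1.
Variable R : realType.
Implicit Types s t : R.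

Definition max1 t := Num.max 1 t.

Lemma max1_ge1 t : 1 <= max1 t. Proof. by rewrite le_max lexx. Qed.
Lemma max1_gt0 t : 0 < max1 t. Proof. exact: lt_le_trans ltr01 (max1_ge1 t). Qed.
Lemma max1_ge0 t : 0 <= max1 t. Proof. exact: ltW (max1_gt0 t). Qed.
Lemma le_max1 t : t <= max1 t. Proof. by rewrite le_max lexx orbT. Qed.
Lemma max1_le t s : 1 <= s -> t <= s -> max1 t <= s.
Proof. by move=> s_ge1 ts; rewrite ge_max s_ge1. Qed.
Lemma logpE t : logp t = ln (max1 t). Proof. by []. Qed.
Lemma logp_ge0 t : 0 <= logp t. Proof. by rewrite logpE ln_ge0 ?max1_ge1. Qed.

Lemma prod_max1_ge1 I (r : seq I) (F : I -> R) : 1 <= \prod_(i <- r) max1 (F i).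
Proof.
by elim/big_rec: _ => // i x _ x_ge1; rewrite mulr_ege1 ?max1_ge1.
Qed.

Lemma ln_prod_max1 I (r : seq I) (F : I -> R) :
  ln (\prod_(i <- r) max1 (F i)) = \sum_(i <- r) logp (F i).
Proof.
elim: r => [|i r IH]; first by rewrite !big_nil ln1.
by rewrite !big_cons lnM ?posrE ?max1_gt0 ?(lt_le_trans ltr01 (prod_max1_ge1 _ _)) // IH.
Qed.

Lemma expr_le_max_bound (t m Q : R) k : 0 <= t -> 1 <= Q ->
  t ^+ k.+1 <= Q * Num.max m (t ^+ k) -> t ^+ k.+1 <= Q ^+ k.+1 * max1 m.
Proof.
move=> t_ge0 Q_ge1; have Q_ge0 := le_trans ler01 Q_ge1.
have QQk : Q <= Q ^+ k.+1 by rewrite ler_eXnr.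
have RHS_ge : Q ^+ k.+1 <= Q ^+ k.+1 * max1 m.
  by rewrite ler_peMr ?max1_ge1 ?exprn_ge0.
have [_|_] := leP (t ^+ k) m => [/le_trans|]; first apply.
  exact: le_trans (ler_wpM2l Q_ge0 (le_max1 m)) (ler_wpM2r (max1_ge0 m) QQk).
have [-> _|t_neq0] := eqVneq t 0; first by rewrite expr0n mulr_ge0 ?exprn_ge0 ?max1_ge0.
have t_gt0 : 0 < t by rewrite lt_def t_neq0.
rewrite exprSr mulrC ler_pM2r ?exprn_gt0 // => t_le_Q.
by apply: le_trans RHS_ge; rewrite -exprS lerXn2r ?nnegrE.
Qed.
End Max1.

Section PolynomialBounds.
Variables (R : realType) (a : algC -> R).
Hypotheses (ha : is_absval a) (hpl : extends_place_of_Q a).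

Lemma absval_sum_bound n (t : 'I_n -> algC) m : 0 <= m ->
  (forall i, a (t i) <= m) -> a (\sum_i t i) <= max1 (a n%:R) * m.
Proof.
move=> m_ge0 t_le; case: (absval_place_cases ha hpl) => [a_nat|a_ultra].
  apply: le_trans (absval_sum ha _ _ _) _.
  apply: le_trans (ler_sum _ (fun i _ => t_le i)) _.
  by rewrite sumr_const card_ord a_nat -[m *+ n]mulr_natl ler_wpM2r ?le_max1.
apply: le_trans (ler_peMl m_ge0 (max1_ge1 _)).
elim/big_rec: _ => [|i s _ s_le]; first by rewrite absval0.
by apply: le_trans (a_ultra _ _) _; rewrite ge_max t_le.
Qed.

Lemma absval_add_bound u w : a (u + w) <= max1 (a 2) * Num.max (a u) (a w).
Proof.
have := @absval_sum_bound 2 (fun i => [:: u; w]`_i) (Num.max (a u) (a w)).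
rewrite !big_ord_recl big_ord0 addr0; apply; first by rewrite le_max absval_ge0.
by move=> [[|[|i]] ?] //=; rewrite le_max lexx ?orbT.
Qed.

Definition coef_bound (p : {poly algC}) := \prod_(c <- p) max1 (a c).

Lemma coef_bound_ge1 p : 1 <= coef_bound p. Proof. exact: prod_max1_ge1. Qed.

Lemma absval_coef_le (p : {poly algC}) i : a p`_i <= coef_bound p.
Proof.
rewrite /coef_bound; elim: (polyseq p) i => [|c s IH] i.
  by rewrite nth_nil absval0 // (le_trans ler01) ?prod_max1_ge1.
rewrite big_cons; case: i => [|i] /=.
  by rewrite -[leLHS]mulr1 ler_pM ?absval_ge0 ?le_max1 ?prod_max1_ge1.
by rewrite -[leLHS]mul1r ler_pM ?absval_ge0 ?max1_ge1 ?IH.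
Qed.

Lemma absval_monomial_le (p : {poly algC}) x i n : (i <= n)%N ->
  a (p`_i * x ^+ i) <= coef_bound p * max1 (a x) ^+ n.
Proof.
move=> i_le_n; rewrite absvalM // absvalX //.
rewrite ler_pM ?exprn_ge0 ?absval_ge0 ?absval_coef_le //.
apply: le_trans (ler_weXn2l (max1_ge1 _) i_le_n).
by rewrite lerXn2r ?nnegrE ?absval_ge0 ?max1_ge0 ?le_max1.
Qed.

Lemma absval_horner_le (p : {poly algC}) x :
  max1 (a p.[x]) <= max1 (a (size p)%:R) * coef_bound p * max1 (a x) ^+ (size p).-1.
Proof.
apply: max1_le.
  by rewrite !mulr_ege1 ?exprn_ege1 ?max1_ge1 ?coef_bound_ge1.
rewrite horner_coef -mulrA absval_sum_bound ?mulr_ge0 ?exprn_ge0 ?max1_ge0 //.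
  exact: le_trans ler01 (coef_bound_ge1 p).
by move=> i; apply: absval_monomial_le; rewrite -ltnS prednK ?(leq_trans _ (ltn_ord i)).
Qed.

(* Write [p.[x] = S + lead_coef p * x ^+ k] with [S] of degree [< k]: if
   [a x > 1], either the leading monomial or [S] dominates [a p.[x]], and
   the latter forces [a x] to be bounded. *)
Lemma absval_horner_ge (p : {poly algC}) x :
  max1 (a x) ^+ (size p).-1 <=
  (max1 (a (lead_coef p)^-1) * max1 (a 2) * max1 (a (size p).-1%:R) * coef_bound p)
    ^+ (size p).-1 * max1 (a p.[x]).
Proof.
rewrite -mulrA; set C := max1 _ * coef_bound p; set Q := _ * C.
have C_ge1 : 1 <= C by rewrite mulr_ege1 ?max1_ge1 ?coef_bound_ge1.
have Q_ge1 : 1 <= Q by rewrite mulr_ege1 // mulr_ege1 ?max1_ge1.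
have [ax_le1|ax_gt1] := leP (a x) 1.
  rewrite (_ : max1 (a x) = 1) ?expr1n ?mulr_ege1 ?exprn_ege1 ?max1_ge1 //.
  by apply/le_anti; rewrite max1_ge1 max1_le.
have max1_ax : max1 (a x) = a x by rewrite /max1 max_r ?ltW.
rewrite max1_ax.
case k_def: (size p).-1 => [|k]; first by rewrite !expr0 mul1r max1_ge1.
have size_p : size p = k.+2 by case: (size p) k_def => // n /= ->.
apply: expr_le_max_bound; rewrite ?absval_ge0 //.
pose S := \sum_(i < k.+1) p`_i * x ^+ i.
have pxE : p.[x] = S + lead_coef p * x ^+ k.+1.
  by rewrite horner_coef size_p big_ord_recr lead_coefE size_p.
have aS : a S <= C * a x ^+ k.
  rewrite /C k_def -mulrA absval_sum_bound ?mulr_ge0 ?exprn_ge0 ?absval_ge0 //.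
    exact: le_trans ler01 (coef_bound_ge1 p).
  by move=> i; rewrite -max1_ax absval_monomial_le // -ltnS.
have lead_neq0 : lead_coef p != 0 by rewrite lead_coef_eq0 -size_poly_eq0 size_p.
have alead : a (lead_coef p) * a x ^+ k.+1 <= max1 (a 2) * Num.max (a p.[x]) (a S).
  rewrite -absvalX // -absvalM // -(absvalN ha S).
  have -> : lead_coef p * x ^+ k.+1 = p.[x] - S by rewrite pxE addrAC subrr add0r.
  exact: absval_add_bound.
have max_le : Num.max (a p.[x]) (a S) <= C * Num.max (a p.[x]) (a x ^+ k).
  rewrite ge_max; apply/andP; split.
    by apply: le_trans (ler_peMl _ C_ge1); rewrite ?le_max ?lexx ?absval_ge0.
  by apply: le_trans aS _; rewrite ler_wpM2l ?le_max ?lexx ?orbT ?(le_trans ler01 C_ge1).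
have alead_gt0 : 0 < a (lead_coef p) by rewrite lt_def absval_eq0 // lead_neq0 absval_ge0.
move: alead; rewrite -ler_pdivlMl // -absvalV // => /le_trans; apply.
rewrite /Q -!mulrA ler_pM ?absval_ge0 ?mulr_ge0 ?le_max1 ?max1_ge0 ?le_max ?absval_ge0 //.
by rewrite ler_wpM2l ?max1_ge0 // mulrA.
Qed.

Definition sum_logp (zs : seq algC) := \sum_(z <- zs) logp (a z).

(* The numbers whose local heights bound the defect between [logp (a p.[x])]
   and [(size p).-1%:R * logp (a x)], in both directions. *)
Definition poly_consts (p : {poly algC}) : seq algC :=
  (size p)%:R :: (size p).-1%:R :: 2 :: (lead_coef p)^-1 :: p.

Lemma sum_logp_ge0 zs : 0 <= sum_logp zs.
Proof. by rewrite sumr_ge0 // => z _; rewrite logp_ge0. Qed.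

Lemma sum_logp_cat zs1 zs2 : sum_logp (zs1 ++ zs2) = sum_logp zs1 + sum_logp zs2.
Proof. exact: big_cat. Qed.

Lemma ln_coef_bound p : ln (coef_bound p) = sum_logp p.
Proof. exact: ln_prod_max1. Qed.

Lemma sum_logp_poly_consts p : sum_logp (poly_consts p) =
  logp (a (size p)%:R) + logp (a (size p).-1%:R) + logp (a 2) +
  logp (a (lead_coef p)^-1) + sum_logp p.
Proof. by rewrite /sum_logp !big_cons !addrA. Qed.

Lemma logp_horner_le (p : {poly algC}) x :
  logp (a p.[x]) <= sum_logp (poly_consts p) + (size p).-1%:R * logp (a x).
Proof.
have coef_bound_gt0 := lt_le_trans ltr01 (coef_bound_ge1 p).
have h := absval_horner_le p x.
rewrite -ler_ln ?posrE ?mulr_gt0 ?exprn_gt0 ?max1_gt0 // in h.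
rewrite !lnM ?posrE ?mulr_gt0 ?exprn_gt0 ?max1_gt0 // in h.
rewrite lnXn ?max1_gt0 // in h.
rewrite ln_coef_bound -!logpE -[logp (a x) *+ _]mulr_natl in h; rewrite sum_logp_poly_consts.
have := logp_ge0 (a (size p).-1%:R); have := logp_ge0 (a 2);
have := logp_ge0 (a (lead_coef p)^-1); lra.
Qed.

Lemma logp_horner_ge (p : {poly algC}) x :
  (size p).-1%:R * logp (a x) <=
  (size p).-1%:R * sum_logp (poly_consts p) + logp (a p.[x]).
Proof.
have coef_bound_gt0 := lt_le_trans ltr01 (coef_bound_ge1 p).
move: (absval_horner_ge p x); set Q := _ * coef_bound p => h.
have Q_gt0 : 0 < Q by rewrite !mulr_gt0 ?max1_gt0.
rewrite -ler_ln ?posrE ?mulr_gt0 ?exprn_gt0 ?max1_gt0 // in h.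
rewrite lnM ?posrE ?exprn_gt0 ?max1_gt0 // !lnXn ?max1_gt0 // /Q in h.
rewrite !lnM ?posrE ?mulr_gt0 ?max1_gt0 // ln_coef_bound -!logpE in h.
rewrite sum_logp_poly_consts.
have := logp_ge0 (a (size p)%:R); have := ler0n R (size p).-1; nra.
Qed.
End PolynomialBounds.

(* [u n +- c / (1 - r) * r ^+ n] are monotone sequences squeezing [u]. *)
Lemma geometric_cauchy_cvgn (R : realType) (u : R ^nat) (c r : R) :
  0 <= r -> r < 1 -> (forall n, `|u n.+1 - u n| <= c * r ^+ n) ->
  cvgn u /\ forall n, `|limn u - u n| <= c / (1 - r) * r ^+ n.
Proof.
move=> r_ge0 r_lt1 u_step; set K := c / (1 - r).
have c_ge0 : 0 <= c by have := u_step 0%N; rewrite expr0 mulr1; apply: le_trans.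
have K_ge0 : 0 <= K by rewrite divr_ge0 // subr_ge0 ltW.
have step n : `|u n.+1 - u n| <= K * r ^+ n - K * r ^+ n.+1.
  rewrite (_ : K * r ^+ n - K * r ^+ n.+1 = c * r ^+ n) // /K exprS.
  by field; rewrite subr_eq0 gt_eqF.
have Krn_ge0 n : 0 <= K * r ^+ n by rewrite mulr_ge0 ?exprn_ge0.
pose up n := u n + K * r ^+ n; pose lo n := u n - K * r ^+ n.
have up_dec : nonincreasing_seq up.
  by apply/nonincreasing_seqP => n; move: (step n); rewrite /up ler_norml => /andP[_]; lra.
have lo_inc : nondecreasing_seq lo.
  by apply/nondecreasing_seqP => n; move: (step n); rewrite /lo ler_norml => /andP[]; lra.
have up_lbound : has_lbound (range up).
  exists (lo 0%N) => _ [n _ <-]; apply: le_trans (lo_inc _ _ (leq0n n)) _.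
  by rewrite /lo /up; have := Krn_ge0 n; lra.
have Krn_cvg0 : (fun n => K * r ^+ n) @ \oo --> 0.
  by rewrite -(mulr0 K); apply: cvgMr; apply: cvg_expr; rewrite ger0_norm.
have up_cvg := nonincreasing_cvgn up_dec up_lbound.
have u_cvg : u @ \oo --> inf (range up).
  have -> : u = up \- (fun n => K * r ^+ n) by apply/funext => n; rewrite /up /= addrK.
  by rewrite -[inf _]subr0; apply: cvgB.
have lo_cvg : lo @ \oo --> inf (range up) by rewrite -[inf _]subr0; apply: cvgB.
split; first exact: cvgP u_cvg.
move=> n; rewrite (cvg_lim _ u_cvg) // ler_distlC.
have := nondecreasing_cvgn_le lo_inc (cvgP _ lo_cvg) n.
have := nonincreasing_cvgn_ge up_dec (cvgP _ up_cvg) n.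
rewrite (cvg_lim _ lo_cvg) // (cvg_lim _ up_cvg) // /lo /up; lra.
Qed.

Lemma cvgn_of_dist_le (R : realType) (u : R ^nat) (l c r : R) : 0 <= r -> r < 1 ->
  (forall n, `|l - u n| <= c * r ^+ n) -> u @ \oo --> l.
Proof.
move=> r_ge0 r_lt1 u_near.
have crn_cvg0 : (fun n => c * r ^+ n) @ \oo --> 0.
  by rewrite -(mulr0 c); apply: cvgMr; apply: cvg_expr; rewrite ger0_norm.
apply: (@squeeze_cvgr _ _ _ _ (fun n => l - c * r ^+ n) (fun n => l + c * r ^+ n)).
- by apply: nearW => n; rewrite -ler_distlC.
- by rewrite -[X in _ --> X]subr0; apply: cvgB => //; exact: cvg_cst.
- by rewrite -[X in _ --> X]addr0; apply: cvgD => //; exact: cvg_cst.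
Qed.

Lemma natr_ratio_lt1 (R : numFieldType) m n : (m < n)%N -> m%:R / n%:R < 1 :> R.
Proof.
by move=> mn; rewrite ltr_pdivrMr ?mul1r ?ltr_nat // ltr0n (leq_ltn_trans (leq0n m) mn).
Qed.

Section Correspondence.
Variables (R : realType) (f g : {poly algC}) (P : nat -> algC).
Hypothesis hP : is_path f g P.
Local Notation d := (size f).-1.
Local Notation e := (size g).-1.
Local Notation consts := (poly_consts f ++ poly_consts g).

Lemma logp_path_step (a : algC -> R) : is_absval a -> extends_place_of_Q a ->
  forall n, `|e%:R * logp (a (P n.+1)) - d%:R * logp (a (P n))| <=
            (d + e).+1%:R * sum_logp a consts.
Proof.
move=> ha hpl n; have gP := logp_horner_ge ha hpl g (P n.+1).
have := logp_horner_le ha hpl g (P n.+1); have := logp_horner_le ha hpl f (P n).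
have := logp_horner_ge ha hpl f (P n); rewrite hP in gP *.
rewrite sum_logp_cat -[(_ + _).+1]addn1 !natrD ler_norml.
have := sum_logp_ge0 a (poly_consts f); have := sum_logp_ge0 a (poly_consts g).
have := ler0n R d; have := ler0n R e; nra.
Qed.

Lemma G_seq_cvg_dist (a : algC -> R) : is_absval a -> extends_place_of_Q a ->
  (e < d)%N -> cvgn (G_seq d e a P) /\ forall n,
  `|G_C d e a P - G_seq d e a P n| <=
  (e%:R / d%:R) ^+ n * ((d + e).+1%:R / (d%:R - e%:R)) * sum_logp a consts.
Proof.
move=> ha hpl ed.
have d_gt0 : 0 < d%:R :> R by rewrite ltr0n (leq_ltn_trans (leq0n e) ed).
have de_gt0 : 0 < d%:R - e%:R :> R by rewrite subr_gt0 ltr_nat.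
set r := e%:R / d%:R; set C := (d + e).+1%:R * sum_logp a consts.
have r_ge0 : 0 <= r by rewrite divr_ge0 // ltW.
have r_lt1 : r < 1 by exact: natr_ratio_lt1.
have G_step n : `|G_seq d e a P n.+1 - G_seq d e a P n| <= C / d%:R * r ^+ n.
  rewrite (_ : _ - _ = r ^+ n * ((e%:R * logp (a (P n.+1)) - d%:R * logp (a (P n))) / d%:R)).
    rewrite normrM normf_div ger0_norm ?exprn_ge0 ?(ger0_norm (ltW d_gt0)) //.
    rewrite mulrC ler_wpM2r ?exprn_ge0 // ler_wpM2r ?invr_ge0 ?(ltW d_gt0) //.
    exact: logp_path_step.
  by rewrite /G_seq /r exprS; field; rewrite gt_eqF.
have [G_cvg G_dist] := geometric_cauchy_cvgn r_ge0 r_lt1 G_step.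
split=> // n; rewrite /G_C [leRHS](_ : _ = C / d%:R / (1 - r) * r ^+ n) //.
by rewrite /C /r; field; rewrite !gt_eqF.
Qed.
End Correspondence.

Section Integration.
Variables (R : realType) (dM : measure_display) (M : measurableType dM).
Variable mu : {measure set M -> \bar R}.

Local Open Scope ereal_scope.

Lemma integral_dist_le (F u w : M -> R) (x y : R) :
  (forall v, 0 <= F v)%R -> (forall v, 0 <= u v)%R -> (forall v, 0 <= w v)%R ->
  measurable_fun setT F -> measurable_fun setT u -> measurable_fun setT w ->
  (forall v, `|F v - u v| <= w v)%R ->
  \int[mu]_v (u v)%:E = x%:E -> \int[mu]_v (w v)%:E = y%:E ->
  \int[mu]_v (F v)%:E \is a fin_num /\ (`|fine (\int[mu]_v (F v)%:E) - x| <= y)%R.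
Proof.
move=> F0 u0 w0 mF mu_ mw Fuw ux wy.
have intD (h k : M -> R) : (forall v, 0 <= h v)%R -> (forall v, 0 <= k v)%R ->
    measurable_fun setT h -> measurable_fun setT k ->
    \int[mu]_v ((h v + k v)%R)%:E = \int[mu]_v (h v)%:E + \int[mu]_v (k v)%:E.
  move=> h0 k0 mh mk; under eq_fun do rewrite EFinD.
  by rewrite ge0_integralD //; by [move=> v _; rewrite lee_fin | apply/measurable_EFinP].
have intF_le : \int[mu]_v (F v)%:E <= (x + y)%:E.
  rewrite EFinD -ux -wy -intD //; apply: ge0_le_integral => //.
  - by move=> v _; rewrite lee_fin.
  - exact/measurable_EFinP.
  - exact/measurable_EFinP/measurable_funD.
  - by move=> v _; rewrite lee_fin; apply: ler_distlDr.
have intF_ge : x%:E <= \int[mu]_v (F v)%:E + y%:E.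
  rewrite -ux -wy -intD //; apply: ge0_le_integral => //.
  - by move=> v _; rewrite lee_fin.
  - exact/measurable_EFinP.
  - exact/measurable_EFinP/measurable_funD.
  - by move=> v _; rewrite lee_fin; apply: ler_distlCDr.
have intF_fin : \int[mu]_v (F v)%:E \is a fin_num.
  rewrite ge0_fin_numE; first exact: le_lt_trans intF_le (ltry _).
  by apply: integral_ge0 => v _; rewrite lee_fin.
split=> //; move: intF_le intF_ge; rewrite -[\int[mu]_v _]fineK // -EFinD !lee_fin.
by rewrite ler_distl; lra.
Qed.
End Integration.

Section HeightIntegral.
Variables (R : realType) (dM : measure_display) (M : measurableType dM).
Variables (absv : M -> algC -> R) (mu : {measure set M -> \bar R}).
Hypothesis hmeas : forall x : algC, measurable_fun setT (fun v => absv v x).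
Hypothesis hheight : forall x : algC,
  ((weil_height R x)%:E = \int[mu]_v (logp (absv v x))%:E)%E.

Lemma measurable_logp z : measurable_fun setT (fun v => logp (absv v z)).
Proof.
apply: (measurableT_comp (f := @ln R) (g := fun v => Num.max 1 (absv v z))).
  exact: measurable_ln.
by apply: measurable_maxr; [exact: measurable_cst | exact: hmeas].
Qed.

Lemma measurable_sum_logp zs : measurable_fun setT (fun v => sum_logp (absv v) zs).
Proof.
elim: zs => [|z zs IH]; rewrite /sum_logp.
  by under eq_fun do rewrite big_nil; exact: measurable_cst.
by under eq_fun do rewrite big_cons; apply: measurable_funD; [exact: measurable_logp | exact: IH].
Qed.

Lemma integral_logp c z : 0 <= c ->
  (\int[mu]_v (c * logp (absv v z))%:E = (c * weil_height R z)%:E)%E.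
Proof.
move=> c_ge0; under eq_fun do rewrite EFinM.
rewrite ge0_integralZl_EFin // -?hheight -?EFinM // => [v _|].
  by rewrite lee_fin logp_ge0.
exact/measurable_EFinP/measurable_logp.
Qed.

Lemma integral_sum_logp c zs : 0 <= c ->
  (\int[mu]_v (c * sum_logp (absv v) zs)%:E =
   (c * \sum_(z <- zs) weil_height R z)%:E)%E.
Proof.
move=> c_ge0; elim: zs => [|z zs IH].
  by rewrite big_nil mulr0; under eq_fun do rewrite /sum_logp big_nil mulr0; exact: integral0.
under eq_fun do rewrite /sum_logp big_cons mulrDr EFinD.
rewrite ge0_integralD // => [|v _||v _|]; rewrite ?lee_fin ?mulr_ge0 ?logp_ge0 ?sum_logp_ge0 //.
- by rewrite integral_logp // IH big_cons mulrDr EFinD.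
- exact/measurable_EFinP/measurable_funM/measurable_logp/measurable_cst.
- exact/measurable_EFinP/measurable_funM/measurable_sum_logp/measurable_cst.
Qed.
End HeightIntegral.

Section PathHeight.
Variables (R : realType) (dM : measure_display) (M : measurableType dM).
Variables (absv : M -> algC -> R) (mu : {measure set M -> \bar R}).
Hypothesis habs : forall v, is_absval (absv v).
Hypothesis hplace : forall v, extends_place_of_Q (absv v).
Hypothesis hmeas : forall x : algC, measurable_fun setT (fun v => absv v x).
Hypothesis hheight : forall x : algC,
  ((weil_height R x)%:E = \int[mu]_v (logp (absv v x))%:E)%E.
Variables (f g : {poly algC}) (P : nat -> algC).
Hypothesis hP : is_path f g P.
Local Notation d := (size f).-1.
Local Notation e := (size g).-1.
Hypothesis ed : (e < d)%N.
Local Notation r := (e%:R / d%:R : R).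
Local Notation zs := (poly_consts f ++ poly_consts g).

Let G_cvg v := G_seq_cvg_dist hP (habs v) (hplace v) ed.

Lemma measurable_G_C : measurable_fun setT (fun v => G_C d e (absv v) P).
Proof.
apply: (measurable_fun_cvg (h := fun n v => G_seq d e (absv v) P n)).
  by move=> n; apply: measurable_funM => //; exact: measurable_logp.
by move=> v _; case: (G_cvg v).
Qed.

Lemma integral_G_C_dist n :
  (\int[mu]_v (G_C d e (absv v) P)%:E)%E \is a fin_num /\
  `|fine (\int[mu]_v (G_C d e (absv v) P)%:E)%E - r ^+ n * weil_height R (P n)| <=
  (d + e).+1%:R / (d%:R - e%:R) * (\sum_(z <- zs) weil_height R z) * r ^+ n.
Proof.
have r_ge0 : 0 <= r by rewrite divr_ge0.
have B_ge0 : 0 <= (d + e).+1%:R / (d%:R - e%:R) :> R.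
  by rewrite divr_ge0 // subr_ge0 ler_nat ltnW.
have G_seq_ge0 v m : 0 <= G_seq d e (absv v) P m by rewrite mulr_ge0 ?exprn_ge0 ?logp_ge0.
have G_ge0 v : 0 <= G_C d e (absv v) P.
  by apply: limr_ge; [case: (G_cvg v) | exact: nearW].
have w_ge0 : 0 <= r ^+ n * ((d + e).+1%:R / (d%:R - e%:R)) by rewrite mulr_ge0 ?exprn_ge0.
rewrite [leRHS]mulrAC [in leRHS](mulrC _ (r ^+ n)).
apply: integral_dist_le G_ge0 (G_seq_ge0^~ n) _ measurable_G_C _ _ (fun v => (G_cvg v).2 n)
  (integral_logp hmeas hheight (P n) (exprn_ge0 n r_ge0))
  (integral_sum_logp hmeas hheight zs w_ge0).
- by move=> v; rewrite mulr_ge0 ?sum_logp_ge0.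
- by apply: measurable_funM => //; exact: measurable_logp.
- exact/measurable_funM/measurable_sum_logp.
Qed.
End PathHeight.

Theorem proposition4p2
  (R : realType)
  (dM : measure_display) (M : measurableType dM)
  (absv : M -> algC -> R)
  (mu : {measure set M -> \bar R})
  (habs : forall v, is_absval (absv v))
  (hplace : forall v, extends_place_of_Q (absv v))
  (hmeas : forall x : algC, measurable_fun setT (fun v => absv v x))
  (hheight : forall x : algC,
      ((weil_height R x)%:E = \int[mu]_v (logp (absv v x))%:E)%E)
  (f g : {poly algC})
  (hdeg : (1 <= (size g).-1 < (size f).-1)%N)
  (P : nat -> algC) (hP : is_path f g P) :
  let d := (size f).-1 in
  let e := (size g).-1 in
  (forall v, cvg (G_seq d e (absv v) P @ \oo)) /\
  measurable_fun setT (fun v => G_C d e (absv v) P) /\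
  exists hhat : R,
    ((fun n => (e%:R / d%:R) ^+ n * weil_height R (P n)) @ \oo --> hhat) /\
    (hhat%:E = \int[mu]_v (G_C d e (absv v) P)%:E)%E.
Proof.
move=> d e; have /andP[_ ed] := hdeg.
have G_int := integral_G_C_dist habs hplace hmeas hheight hP ed.
split=> [v|]; first by case: (G_seq_cvg_dist hP (habs v) (hplace v) ed).
split; first exact: (measurable_G_C habs hplace hmeas hP ed).
exists (fine (\int[mu]_v (G_C d e (absv v) P)%:E)); split.
  apply: cvgn_of_dist_le (natr_ratio_lt1 _ ed) (fun n => (G_int n).2).
  by rewrite divr_ge0.
by rewrite fineK //; case: (G_int 0%N).
Qed.
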